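(* Let $b\ge0$ be a constant and assume (A1) and (A2). Let $\tilde M=\phi_{\max}\psi_{\max}\big[2+\big(b\max\{\sqrt{d_1}\theta_{\max},\sqrt{d_2}\gamma_{\max}\}/\sqrt2+\sqrt{d_1d_2}\gamma_{\max}\theta_{\max}\big)\phi_{\max}\psi_{\max}\big]$. For any realization of the data with $y_i\in\{0,1\}$: when $\|\theta-\theta_*\|_2\le b/\sqrt2$, for all $\gamma\in\mathbb{R}^{d_2}$ and $\gamma'\in\Gamma$, $$\|\nabla_\theta L_n(\theta,\gamma)-\nabla_\theta L_n(\theta,\gamma')\|_2\le\tilde M\|\gamma-\gamma'\|_2;$$ when $\|\gamma-\gamma_*\|_2\le b/\sqrt2$, for all $\theta\in\mathbb{R}^{d_1}$ and $\theta'\in\Theta$, $$\|\nabla_\gamma L_n(\theta,\gamma)-\nabla_\gamma L_n(\theta',\gamma)\|_2\le\tilde M\|\theta-\theta'\|_2.$$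
   Context: Data $(x_i,s_i,a_i^{(0)},a_i^{(1)},y_i)$, $i=1,\dots,n$, with $y_i\in\{0,1\}$. Known feature maps $\phi$ ($\mathbb{R}^{d_1}$-valued), $\psi_0$ (real), $\psi$ ($\mathbb{R}^{d_2}$-valued). $\sigma_\gamma(x)=\psi_0(x)+\gamma^\top\psi(x)$, $z_i=\phi(s_i,a_i^{(1)})-\phi(s_i,a_i^{(0)})$, $\mu(v)=1/(1+e^{-v})$, $L_n(\theta,\gamma)=-\frac1n\sum_i\{y_i\log\mu(\sigma_\gamma(x_i)\theta^\top z_i)+(1-y_i)\log[1-\mu(\sigma_\gamma(x_i)\theta^\top z_i)]\}$. (A1): $\|\phi(s,a)\|_2\le\phi_{\max}$; the true parameter $\theta_*\in\Theta=\{\theta:\|\theta\|_\infty\le\theta_{\max}\}$. (A2): $\psi_0\not\equiv0$; $\sup_x\|(\psi_0(x),\psi(x)^\top)\|_2\le\psi_{\max}$; the true $\gamma_*\in\Gamma=\{\gamma:\|(1,\gamma^\top)\|_\infty\le\gamma_{\max}\}$. *)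

From HB Require Import structures.
From mathcomp Require Import all_boot all_order all_algebra.
From mathcomp Require Import all_classical all_reals all_analysis.
Set Implicit Arguments. Unset Strict Implicit. Unset Printing Implicit Defensive.
Import Order.TTheory GRing.Theory Num.Theory.
Import numFieldNormedType.Exports.
Local Open Scope ring_scope.

Definition dotv {R : realType} {d : nat} (u v : 'rV[R]_d) : R :=
  \sum_(j < d) u 0 j * v 0 j.
Definition norm2 {R : realType} {d : nat} (v : 'rV[R]_d) : R :=
  Num.sqrt (\sum_(j < d) v 0 j ^+ 2).

Definition logistic {R : realType} (v : R) : R := 1 / (1 + expR (- v)).

Definition sigmaG {R : realType} {X : Type} {d2 : nat}
  (psi0 : X -> R) (psi : X -> 'rV[R]_d2) (g : 'rV[R]_d2) (x : X) : R :=
  psi0 x + dotv g (psi x).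

Definition zvec {R : realType} {S A : Type} {d1 : nat}
  (phi : S -> A -> 'rV[R]_d1) (s : S) (a0 a1 : A) : 'rV[R]_d1 :=
  phi s a1 - phi s a0.

Definition Ln {R : realType} {X S A : Type} {d1 d2 n : nat}
  (phi : S -> A -> 'rV[R]_d1) (psi0 : X -> R) (psi : X -> 'rV[R]_d2)
  (x : 'I_n -> X) (s : 'I_n -> S) (a0 a1 : 'I_n -> A) (y : 'I_n -> R)
  (th : 'rV[R]_d1) (g : 'rV[R]_d2) : R :=
  - (n%:R)^-1 * \sum_(i < n)
      (let u := sigmaG psi0 psi g (x i) * dotv th (zvec phi (s i) (a0 i) (a1 i)) in
       y i * ln (logistic u) + (1 - y i) * ln (1 - logistic u)).

Definition grad {R : realType} {d : nat} (f : 'rV[R]_d -> R) (v : 'rV[R]_d)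
  : 'rV[R]_d :=
  \row_(j < d) derive f v (delta_mx 0 j).

From HB Require Import structures.
From mathcomp Require Import all_boot all_order all_algebra.
From mathcomp Require Import all_classical all_reals all_analysis.
From mathcomp Require Import ring lra.
Set Implicit Arguments. Unset Strict Implicit. Unset Printing Implicit Defensive.
Import Order.TTheory GRing.Theory Num.Theory.
Import numFieldNormedType.Exports.
Local Open Scope classical_set_scope.
Local Open Scope ring_scope.

(* The gradient differences are sample averages of the scalar
   (y - mu (a c)) a - (y - mu (a' c)) a' times a feature vector, with
   (a, a', c) = (sigma_g, sigma_g', theta^T z) for the theta-gradient and
   (theta^T z, theta'^T z, sigma_g) for the gamma-gradient.  With h u = u mu u this
   scalar is +-(h (a c) - h (a' c)) / c, and everything rests on the estimate
   |h u - h u'| <= |u - u'| (1 + |u'| / 6).  It follows from the mean value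
   theorem and -1 <= h' c <= 1 + |c| / 6, except in the case 0 < u' < u, which
   uses the concavity of mu on [0, +oo) and mu u <= 3/4 + u/12.  Cauchy-Schwarz bounds
   |a - a'|, |a'| and |c| by norms, and (A1), (A2) together with the distance to
   (theta_star, gamma_star) bound the resulting per-sample factor by M~. *)

Lemma exists_mean_value (R : realType) (f df : R -> R) (a b : R) : a < b ->
  (forall x : R, is_derive x 1 f (df x)) ->
  exists2 c, a < c < b & f b - f a = df c * (b - a).
Proof.
move=> ab f_df.
have f_cont : {within `[a, b], continuous f}.
  apply/continuous_subspaceT => r; apply/differentiable_continuous/derivable1_diffP.
  by have [] := f_df r.
have [c] := MVT ab (fun x _ => f_df x) f_cont.
by rewrite in_itv; exists c.
Qed.

Section Logistic.
Variable R : realType.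
Implicit Types u v w : R.
Local Notation mu := (@logistic R).

Lemma logisticE v : mu v = (1 + expR (- v))^-1.
Proof. by rewrite /logistic div1r. Qed.

Lemma logistic_denom_gt0 v : 0 < 1 + expR (- v).
Proof. by rewrite addr_gt0 // expR_gt0. Qed.

Lemma logistic_gt0 v : 0 < mu v.
Proof. by rewrite logisticE invr_gt0 logistic_denom_gt0. Qed.

Lemma logistic_lt1 v : mu v < 1.
Proof. by rewrite logisticE invf_lt1 ?logistic_denom_gt0 // ltrDl expR_gt0. Qed.

Lemma logistic_mul_denom v : mu v * (1 + expR (- v)) = 1.
Proof. by rewrite logisticE mulVf // gt_eqF ?logistic_denom_gt0. Qed.

Lemma logisticN v : mu (- v) = 1 - mu v.
Proof.
have := expR_gt0 v; have := logistic_denom_gt0 v.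
rewrite !logisticE opprK expRN => ? ?.
by field; rewrite !gt_eqF // addr_gt0.
Qed.

Lemma logistic0 : mu 0 = 1 / 2.
Proof. by rewrite logisticE oppr0 expR0 div1r. Qed.

Lemma logistic_le u v : u <= v -> mu u <= mu v.
Proof.
move=> uv; have e : expR (- v) <= expR (- u) by rewrite ler_expR lerN2.
have := logistic_mul_denom u; have := logistic_mul_denom v.
have := logistic_gt0 u; have := logistic_gt0 v; have := expR_gt0 (- v).
nra.
Qed.

Lemma logistic_ge_half v : 0 <= v -> 1 / 2 <= mu v.
Proof. by rewrite -logistic0; apply: logistic_le. Qed.

Lemma is_derive_logistic v : is_derive v 1 mu (mu v * (1 - mu v)).
Proof.
have -> : mu = (fun u => (1 + expR (- u))^-1) by apply/funext => u; rewrite logisticE.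
have denom_neq0 := gt_eqF (logistic_denom_gt0 v).
by apply: is_derive_eq; rewrite -[_ *: _]/(_ * _); field.
Qed.

Definition dxlogistic v := mu v + v * (mu v * (1 - mu v)).

Lemma is_derive_xlogistic v : is_derive v 1 (fun u => u * mu u) (dxlogistic v).
Proof.
have -> : (fun u => u * mu u) = (id : R -> R) * mu by [].
apply: (is_derive_eq (is_deriveM (is_derive_id v 1) (is_derive_logistic v))).
by rewrite /dxlogistic -[_ *: _]/(_ * _) -[_%:A]/(_ * 1) mulr1 addrC.
Qed.

Lemma dxlogistic_ge_N1 v : -1 <= dxlogistic v.
Proof.
have := logistic_gt0 v; have := logistic_lt1 v; rewrite /dxlogistic => ? ?.
have [v_ge0|v_lt0] := lerP 0 v.
  have : 0 <= mu v * (1 - mu v) by nra.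
  nra.
have := expR_ge1Dx (- v); have := logistic_mul_denom v => ? ?.
have : -1 <= v * mu v by nra.
nra.
Qed.

Lemma dxlogistic_le1 v : v <= 1 -> dxlogistic v <= 1.
Proof.
have := logistic_gt0 v; have := logistic_lt1 v; rewrite /dxlogistic => ? ? ?.
have : v * mu v <= 1 by have [] := lerP 0 v; nra.
nra.
Qed.

Lemma expR_ge_sqr v : 0 <= v -> (1 + v / 2) ^+ 2 <= expR v.
Proof.
move=> v_ge0; rewrite [X in expR X]splitr expRD -expr2.
by rewrite lerXn2r ?nnegrE ?expR_ge0 ?expR_ge1Dx //; lra.
Qed.

Lemma dxlogistic_le_linear v : 1 < v -> dxlogistic v <= 1 + v / 6.
Proof.
move=> v_gt1; have := logistic_gt0 v; have := logistic_lt1 v; rewrite /dxlogistic => ? ?.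
have := expR_ge_sqr (ltW (lt_trans ltr01 v_gt1)); have := expR_gt0 v.
have : (1 - mu v) * (1 + expR v) = 1.
  by rewrite -logisticN; have := logistic_mul_denom (- v); rewrite opprK.
have : v * mu v - 1 <= v - 1 by nra.
nra.
Qed.

Lemma dxlogistic_le u v : u <= v -> dxlogistic u <= 1 + `|v| / 6.
Proof.
move=> uv; have := normr_ge0 v.
have [u_le1|u_gt1] := lerP u 1; first by have := dxlogistic_le1 u_le1; lra.
have := dxlogistic_le_linear u_gt1; rewrite ger0_norm; lra.
Qed.

Lemma logistic_chord0_le v w : 0 < v < w -> v * (mu w - 1 / 2) <= w * (mu v - 1 / 2).
Proof.
case/andP=> v_gt0 vw.
have [c1 /andP[c1_gt0 c1v] e1] := exists_mean_value v_gt0 (@is_derive_logistic).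
have [c2 /andP[vc2 c2w] e2] := exists_mean_value vw (@is_derive_logistic).
rewrite logistic0 subr0 in e1.
have m12 : mu c1 <= mu c2 by apply: logistic_le; lra.
have m1_ge : 1 / 2 <= mu c1 by apply: logistic_ge_half; lra.
(* mu' = mu (1 - mu) decreases on [0, +oo), so the chord slope of mu on [0, v]
   dominates the one on [v, w] *)
have slope : mu c2 * (1 - mu c2) <= mu c1 * (1 - mu c1) by nra.
have : 0 <= v * (w - v) * (mu c1 * (1 - mu c1) - mu c2 * (1 - mu c2)).
  by rewrite !mulr_ge0 //; lra.
nra.
Qed.

Lemma expRN2_ge : 1 / 9 <= expR (- 2) :> R.
Proof.
have -> : (- 2 : R) = 12%:R * (- (1 / 6)) by rewrite mulrN; congr (- _); field.
rewrite expRM_natl; apply: le_trans (_ : (1 - 1 / 6) ^+ 12 <= _).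
  by rewrite !exprS expr0; lra.
by rewrite lerXn2r ?nnegrE ?expR_ge0 ?expR_ge1Dx //; lra.
Qed.

Lemma logistic_le_affine v : 0 <= v -> mu v <= 3 / 4 + v / 12.
Proof.
move=> v_ge0; have := logistic_lt1 v.
have [v_ge3|v_lt3] := lerP 3 v; first lra.
have e : expR (- v) = expR (- 2) * expR (2 - v) by rewrite -expRD; congr expR; ring.
have := expR_ge1Dx (2 - v); have := expRN2_ge; have := expR_gt0 (2 - v) => ? ? ? ?.
have : (3 - v) / 9 <= expR (- v) by rewrite e; nra.
have := logistic_mul_denom v; have := logistic_gt0 v.
nra.
Qed.

Lemma xlogistic_diff_le_pos u' u : 0 < u' < u ->
  u * mu u - u' * mu u' <= (u - u') * (1 + u' / 6).
Proof.
case/andP=> u'_gt0 u'u; have u_gt0 : 0 < u by lra.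
have chord := logistic_chord0_le (introT andP (conj u'_gt0 u'u)).
have := logistic_le_affine (ltW u_gt0); have := logistic_lt1 u => ? ?.
rewrite -(ler_pM2l u_gt0).
have step : u * (u * mu u - u' * mu u') <= (u - u') * (u * mu u + u' * (mu u - 1 / 2)).
  nra.
apply: le_trans step _.
rewrite [X in _ <= X]mulrCA; apply: ler_wpM2l; first lra.
have [c_ge0|c_lt0] := lerP 0 (u / 6 - mu u + 1 / 2); nra.
Qed.

Lemma xlogistic_diff_le u u' :
  `|u * mu u - u' * mu u'| <= `|u - u'| * (1 + `|u'| / 6).
Proof.
have n_ge0 : 0 <= `|u'| / 6 by rewrite divr_ge0.
have [uu'|u'u|->] := ltgtP u u'; last by rewrite !subrr normr0 mul0r.
- have [c /andP[uc cu'] e] := exists_mean_value uu' is_derive_xlogistic.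
  rewrite distrC e (distrC u) normrM [`|u' - u|]gtr0_norm ?subr_gt0 // mulrC.
  apply: ler_wpM2l; first by rewrite subr_ge0 ltW.
  rewrite ler_norml; apply/andP.
  by have := dxlogistic_ge_N1 c; have := dxlogistic_le (ltW cu'); split; lra.
- have [c /andP[u'c cu] e] := exists_mean_value u'u is_derive_xlogistic.
  rewrite [`|u - u'|]gtr0_norm ?subr_gt0 // ler_norml e.
  have := dxlogistic_ge_N1 c => ?.
  apply/andP; split; first nra.
  have [c_le1|c_gt1] := lerP c 1; first by have := dxlogistic_le1 c_le1; nra.
  rewrite -e; have [u'_le0|u'_gt0] := lerP u' 0.
    have := logistic_lt1 u; have := logistic_gt0 u'; have := logistic_lt1 u'; nra.
  by rewrite (ger0_norm (ltW u'_gt0)) xlogistic_diff_le_pos // u'_gt0.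
Qed.
End Logistic.

Lemma logistic_score_diff_le (R : realType) (y a a' c : R) : y = 0 \/ y = 1 ->
  `|(y - logistic (a * c)) * a - (y - logistic (a' * c)) * a'|
    <= `|a - a'| * (1 + `|a'| * `|c| / 6).
Proof.
move=> y01; have [->|c_neq0] := eqVneq c 0.
  rewrite !mulr0 logistic0 normr0 mulr0 mul0r addr0 mulr1 -mulrBr normrM mulrC ler_piMr //.
  by case: y01 => ->; rewrite ?sub0r ?normrN ger0_norm; lra.
have c_gt0 : 0 < `|c| by rewrite normr_gt0.
rewrite -(ler_pM2r c_gt0) -normrM.
have -> : `|a - a'| * (1 + `|a'| * `|c| / 6) * `|c|
    = `|a * c - a' * c| * (1 + `|a' * c| / 6) by rewrite -mulrBl !normrM; ring.
(* with h u := u * logistic u, the left side is |h (a c) - h (a' c)| if y = 0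
   and |h (- a c) - h (- a' c)| if y = 1 *)
case: y01 => ->.
- have -> : ((0 - logistic (a * c)) * a - (0 - logistic (a' * c)) * a') * c
      = - (a * c * logistic (a * c) - a' * c * logistic (a' * c)) by ring.
  by rewrite normrN xlogistic_diff_le.
- have -> : ((1 - logistic (a * c)) * a - (1 - logistic (a' * c)) * a') * c
      = - (- (a * c) * logistic (- (a * c)) - - (a' * c) * logistic (- (a' * c))).
    by rewrite !logisticN; ring.
  have := xlogistic_diff_le (- (a * c)) (- (a' * c)).
  by rewrite -opprD !normrN.
Qed.

Lemma logistic_score_diff_bounded (R : realType) (y a a' c al be ga : R) :
  y = 0 \/ y = 1 -> `|a - a'| <= al -> `|a'| <= be -> `|c| <= ga ->
  `|(y - logistic (a * c)) * a - (y - logistic (a' * c)) * a'|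
    <= al * (1 + be * ga / 6).
Proof.
move=> y01 aa'_le a'_le c_le; apply: le_trans (logistic_score_diff_le _ _ _ y01) _.
apply: ler_pM => //.
by rewrite lerD2l ler_wpM2r ?invr_ge0 // ler_pM.
Qed.

Section Euclidean.
Variable R : realType.

Lemma cauchy_schwarz_sum d (a b : 'I_d -> R) :
  (\sum_(k < d) a k * b k) ^+ 2 <= (\sum_(k < d) a k ^+ 2) * (\sum_(k < d) b k ^+ 2).
Proof.
set A := \sum_(k < d) a k ^+ 2; set B := \sum_(k < d) b k ^+ 2.
set C := \sum_(k < d) a k * b k.
have A_ge0 : 0 <= A by apply: sumr_ge0 => k _; exact: sqr_ge0.
have B_ge0 : 0 <= B by apply: sumr_ge0 => k _; exact: sqr_ge0.
have residual : 0 <= A * (A * B - C ^+ 2).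
  have <- : \sum_(k < d) (A * b k - C * a k) ^+ 2 = A * (A * B - C ^+ 2).
    rewrite (eq_bigr (fun k => A ^+ 2 * b k ^+ 2 - (2 * A * C) * (a k * b k) + C ^+ 2 * a k ^+ 2));
      last by move=> k _; ring.
    by rewrite big_split /= sumrB -!mulr_sumr -/A -/B -/C; ring.
  by apply: sumr_ge0 => k _; exact: sqr_ge0.
have [A0|A_neq0] := eqVneq A 0; last first.
  by move: residual; rewrite pmulr_rge0 ?lt_def ?A_neq0 // subr_ge0 mulrC.
have a0 k : a k = 0.
  apply/eqP; rewrite -sqrf_eq0; move/eqP: A0; rewrite psumr_eq0 => [/allP|]; last first.
    by move=> *; exact: sqr_ge0.
  by apply; rewrite mem_index_enum.
have -> : C = 0 by rewrite /C big1 // => k _; rewrite a0 mul0r.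
by rewrite expr0n /= mulr_ge0.
Qed.

Section Norm2.
Variable d : nat.
Implicit Types u v w : 'rV[R]_d.

Lemma sumsq_ge0 v : 0 <= \sum_(j < d) v 0 j ^+ 2.
Proof. by apply: sumr_ge0 => j _; exact: sqr_ge0. Qed.

Lemma norm2_ge0 v : 0 <= norm2 v.
Proof. exact: sqrtr_ge0. Qed.

Lemma norm2_sqr v : norm2 v ^+ 2 = \sum_(j < d) v 0 j ^+ 2.
Proof. by rewrite sqr_sqrtr // sumsq_ge0. Qed.

Lemma normr_dotv_le u v : `|dotv u v| <= norm2 u * norm2 v.
Proof.
rewrite -sqrtr_sqr -sqrtrM ?sumsq_ge0 // ler_sqrt ?mulr_ge0 ?sumsq_ge0 //.
exact: cauchy_schwarz_sum.
Qed.

Lemma dotvBl u v w : dotv (u - v) w = dotv u w - dotv v w.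
Proof. by rewrite /dotv -sumrB; apply: eq_bigr => j _; rewrite !mxE mulrBl. Qed.

Lemma dotvDl_delta u w (h : R) (j : 'I_d) :
  dotv (h *: delta_mx 0 j + u) w = dotv u w + h * w 0 j.
Proof.
rewrite /dotv (eq_bigr (fun k => u 0 k * w 0 k + h * (delta_mx 0 j : 'rV_d) 0 k * w 0 k));
  last by move=> k _; rewrite !mxE; ring.
rewrite big_split /=; congr (_ + _).
rewrite (bigD1 j) //= big1 ?mxE ?eqxx ?addr0 ?mulr1 // => k kj.
by rewrite mxE eqxx (negbTE kj) mulr0 mul0r.
Qed.

Lemma norm2Z (a : R) v : norm2 (a *: v) = `|a| * norm2 v.
Proof.
rewrite /norm2 (eq_bigr (fun j => a ^+ 2 * v 0 j ^+ 2)) => [|j _]; last first.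
  by rewrite mxE exprMn.
by rewrite -mulr_sumr sqrtrM ?sqr_ge0 // sqrtr_sqr.
Qed.

Lemma norm2N v : norm2 (- v) = norm2 v.
Proof. by rewrite -scaleN1r norm2Z normrN normr1 mul1r. Qed.

Lemma norm2D_le u v : norm2 (u + v) <= norm2 u + norm2 v.
Proof.
rewrite -(ger0_norm (addr_ge0 (norm2_ge0 u) (norm2_ge0 v))) -sqrtr_sqr ler_sqrt ?sqr_ge0 //.
have -> : \sum_(j < d) (u + v) 0 j ^+ 2 = norm2 u ^+ 2 + 2 * dotv u v + norm2 v ^+ 2.
  rewrite !norm2_sqr /dotv mulr_sumr -!big_split /=.
  by apply: eq_bigr => j _; rewrite mxE; ring.
have := normr_dotv_le u v; have := ler_norm (dotv u v).
rewrite sqrrD -mulr_natr; lra.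
Qed.

Lemma norm2B_le u v : norm2 (u - v) <= norm2 u + norm2 v.
Proof. by rewrite -(norm2N v) norm2D_le. Qed.

Lemma norm2_le_dist u v (r t : R) :
  norm2 (u - v) <= r -> norm2 v <= t -> norm2 u <= r + t.
Proof.
move=> uv v_le; apply: le_trans (lerD uv v_le).
by have := norm2D_le (u - v) v; rewrite subrK.
Qed.

Lemma norm2_sum_le n (F : 'I_n -> 'rV[R]_d) :
  norm2 (\sum_(i < n) F i) <= \sum_(i < n) norm2 (F i).
Proof.
apply: (big_ind2 (fun x y => norm2 x <= y)) => //.
- by rewrite /norm2 big1 ?sqrtr0 // => j _; rewrite mxE expr0n.
- by move=> ? ? ? ? ? ?; apply: le_trans (norm2D_le _ _) (lerD _ _).
Qed.

Lemma norm2_dim0 v : d = 0%N -> norm2 v = 0.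
Proof.
by move=> d0; rewrite /norm2 big1 ?sqrtr0 // => j _; have := ltn_ord j; rewrite {2}d0.
Qed.

Lemma norm2_le_sqrt_dim v (m : R) : (forall j, `|v 0 j| <= m) ->
  norm2 v <= Num.sqrt d%:R * m.
Proof.
move=> v_le; have [d0|d_gt0] := posnP d; first by rewrite norm2_dim0 // d0 sqrtr0 mul0r.
have m_ge0 : 0 <= m := le_trans (normr_ge0 _) (v_le (Ordinal d_gt0)).
have bound_ge0 : 0 <= Num.sqrt d%:R * m by rewrite mulr_ge0 ?sqrtr_ge0.
rewrite -(ger0_norm bound_ge0) -sqrtr_sqr ler_sqrt ?sqr_ge0 //.
rewrite exprMn sqr_sqrtr ?ler0n // -[d in d%:R]card_ord mulr_natl -sumr_const.
by apply: ler_sum => j _; rewrite -real_normK ?num_real // ler_sqr ?nnegrE.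
Qed.

Lemma norm2_mean_rowB_le n (f f' : 'I_n -> R) (V : 'I_n -> 'rV[R]_d) (K : R) : (0 < n)%N ->
  (forall i, `|f i - f' i| * norm2 (V i) <= K) ->
  norm2 (\row_j (- n%:R^-1 * \sum_(i < n) f i * V i 0 j)
         - \row_j (- n%:R^-1 * \sum_(i < n) f' i * V i 0 j)) <= K.
Proof.
move=> n_gt0 term_le.
have -> : \row_j (- n%:R^-1 * \sum_(i < n) f i * V i 0 j)
         - \row_j (- n%:R^-1 * \sum_(i < n) f' i * V i 0 j)
    = (- n%:R^-1) *: \sum_(i < n) (f i - f' i) *: V i.
  apply/matrixP => i j; rewrite !mxE -mulrBr -sumrB summxE; congr (_ * _).
  by apply: eq_bigr => k _; rewrite !mxE (ord1 i) mulrBl.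
rewrite norm2Z normrN ger0_norm ?invr_ge0 ?ler0n // ler_pdivrMl ?ltr0n //.
apply: le_trans (norm2_sum_le _) _.
rewrite -[n in n%:R * _]card_ord mulr_natl -sumr_const.
by apply: ler_sum => i _; rewrite norm2Z.
Qed.
End Norm2.
End Euclidean.

Section Derivatives.
Variable R : realType.
Local Notation mu := (@logistic R).

Definition logloss (y u : R) := y * ln (mu u) + (1 - y) * ln (1 - mu u).

Lemma is_derive_logloss (y u : R) : is_derive u 1 (logloss y) (y - mu u).
Proof.
have := logistic_gt0 u; have := logistic_lt1 u => mu_lt1 mu_gt0.
have one_minus_gt0 : 0 < 1 - mu u by rewrite subr_gt0.
have d_ln_mu : is_derive u 1 (@ln R \o mu) ((mu u)^-1 * (mu u * (1 - mu u))).
  by apply: is_derive1_comp; [exact: is_derive1_ln | exact: is_derive_logistic].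
have d_ln_1mu : is_derive u 1 (@ln R \o (fun t => 1 - mu t))
    ((1 - mu u)^-1 * - (mu u * (1 - mu u))).
  have d_1mu : is_derive u 1 (fun t => 1 - mu t) (- (mu u * (1 - mu u))).
    have := is_deriveB (is_derive_cst (1 : R) u 1) (is_derive_logistic u).
    by rewrite sub0r.
  exact: (is_derive1_comp (g := fun t => 1 - mu t) (is_derive1_ln one_minus_gt0) d_1mu).
have -> : logloss y = y \*: (@ln R \o mu) + (1 - y) \*: (@ln R \o (fun t => 1 - mu t)) by [].
apply: is_derive_eq; rewrite -[y *: _]/(y * _) -[(1 - y) *: _]/((1 - y) * _).
by field; rewrite !gt_eqF.
Qed.

Lemma derive_along d (f : 'rV[R]_d -> R) (v e : 'rV[R]_d) :
  derive f v e = derive (fun h : R => f (h *: e + v)) 0 1.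
Proof.
rewrite /derive /=.
suff -> : (fun h => h^-1 *: (f ((h *: 1 + 0) *: e + v) - f (0 *: e + v))) =
    (fun h => h^-1 *: (f (h *: e + v) - f v)) by [].
by apply/funext => h; rewrite scale0r add0r addr0 -[h *: 1]/(h * 1) mulr1.
Qed.

Lemma derive_mean_logloss n (c : R) (y A B : 'I_n -> R) :
  derive (fun h : R => c * \sum_(i < n) logloss (y i) (A i + h * B i)) 0 1
  = c * \sum_(i < n) (y i - mu (A i)) * B i.
Proof.
have d_line i : is_derive (0 : R) 1 (fun h => A i + h * B i) (B i).
  have -> : (fun h => A i + h * B i) = cst (A i) + (B i \*: id).
    by apply/funext => h /=; rewrite mulrC.
  by apply: is_derive_eq; rewrite add0r -[B i *: 1]/(B i * 1) mulr1.
have d_term i : is_derive (0 : R) 1 (fun h => logloss (y i) (A i + h * B i))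
    ((y i - mu (A i)) * B i).
  have := is_derive1_comp (g := fun h => A i + h * B i)
    (is_derive_logloss (y i) (A i + 0 * B i)) (d_line i).
  by rewrite mul0r addr0.
have -> : (fun h : R => c * \sum_(i < n) logloss (y i) (A i + h * B i)) =
    c \*: \sum_(i < n) (fun h : R => logloss (y i) (A i + h * B i)).
  by apply/funext => h /=; rewrite fct_sumE.
by rewrite derive_val.
Qed.
End Derivatives.

(* Z <= 2 Ph, P <= Ps and (P0 + G P) P <= Ps^2 (1/2 + G) bound the left side by
   2 Ph Ps + Ph^2 Ps^2 T (1 + 2 G) / 3. *)
Lemma sample_factor_le (R : realType) (Ph Ps P0 P Z T G E : R) :
  0 <= P0 -> 0 <= P -> P0 ^+ 2 + P ^+ 2 <= Ps ^+ 2 -> 0 <= Ps ->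
  0 <= Z -> Z <= 2 * Ph -> 0 <= T -> 0 <= G -> 0 <= E ->
  (P = 0 \/ T * (1 + 2 * G) / 3 <= E) ->
  P * (1 + (P0 + G * P) * (T * Z) / 6) * Z <= Ph * Ps * (2 + E * Ph * Ps).
Proof.
move=> P0_ge0 P_ge0 PPs Ps_ge0 Z_ge0 Z_le T_ge0 G_ge0 E_ge0.
have Ph_ge0 : 0 <= Ph by lra.
case=> [->|TG_le]; first by rewrite !mul0r !(mulr_ge0, addr_ge0).
have P_le : P <= Ps by nra.
have PP0_le : P * P0 <= Ps ^+ 2 / 2 by have := sqr_ge0 (P - P0); rewrite sqrrB; lra.
have PQ_le : (P0 + G * P) * P <= Ps ^+ 2 * (1 / 2 + G) by nra.
have PZ_le : P * Z <= 2 * Ph * Ps by nra.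
have cubic_le : (P0 + G * P) * P * (T * Z ^+ 2) <= Ps ^+ 2 * (1 / 2 + G) * (T * (4 * Ph ^+ 2)).
  apply: ler_pM; rewrite ?mulr_ge0 //; first by nra.
  by apply: ler_wpM2l => //; nra.
have E_le : Ps ^+ 2 * (1 / 2 + G) * (T * (4 * Ph ^+ 2)) / 6 <= Ph ^+ 2 * Ps ^+ 2 * E.
  rewrite (_ : _ / 6 = Ph ^+ 2 * Ps ^+ 2 * (T * (1 + 2 * G) / 3)); last by field.
  by apply: ler_wpM2l => //; nra.
have -> : P * (1 + (P0 + G * P) * (T * Z) / 6) * Z
    = P * Z + (P0 + G * P) * P * (T * Z ^+ 2) / 6 by field.
have -> : Ph * Ps * (2 + E * Ph * Ps) = 2 * Ph * Ps + Ph ^+ 2 * Ps ^+ 2 * E by ring.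
lra.
Qed.

Lemma coef_le_near_theta_star (R : realType) (B T K t G : R) :
  0 <= B -> 1 <= K -> 0 <= t -> t <= B + T -> G <= K ->
  t * (1 + 2 * G) / 3 <= B * Num.max T K + T * K.
Proof.
move=> B_ge0 K_ge1 t_ge0 t_le G_le.
have K_le_max : K <= Num.max T K by rewrite le_max lexx orbT.
have : t * (1 + 2 * G) / 3 <= t * K by nra.
nra.
Qed.

Lemma coef_le_near_gamma_star (R : realType) (B T K t G : R) :
  0 <= B -> 1 <= K -> 0 <= t -> t <= T -> 0 <= G -> G <= B + K ->
  t * (1 + 2 * G) / 3 <= B * Num.max T K + T * K.
Proof.
move=> B_ge0 K_ge1 t_ge0 t_le G_ge0 G_le.
have T_le_max : T <= Num.max T K by rewrite le_max lexx.
have : t * (1 + 2 * G) <= T * (1 + 2 * B + 2 * K) by nra.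
nra.
Qed.

Lemma norm2_zvec_le (R : realType) (S A : Type) d (phi : S -> A -> 'rV[R]_d) (m : R)
    (s : S) (a0 a1 : A) :
  (forall s0 a, norm2 (phi s0 a) <= m) -> norm2 (zvec phi s a0 a1) <= 2 * m.
Proof.
move=> phi_le; have := norm2B_le (phi s a1) (phi s a0).
by have := phi_le s a0; have := phi_le s a1; rewrite /zvec; lra.
Qed.

Lemma sqr_normr_norm2_le (R : realType) d (a : R) (v : 'rV[R]_d) (m : R) :
  Num.sqrt (a ^+ 2 + \sum_(j < d) v 0 j ^+ 2) <= m -> `|a| ^+ 2 + norm2 v ^+ 2 <= m ^+ 2.
Proof.
move=> sqrt_le; have sum_ge0 : 0 <= a ^+ 2 + \sum_(j < d) v 0 j ^+ 2.
  by rewrite addr_ge0 ?sqr_ge0 ?sumsq_ge0.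
rewrite real_normK ?num_real // norm2_sqr -(sqr_sqrtr sum_ge0).
by rewrite lerXn2r ?nnegrE ?sqrtr_ge0 // (le_trans (sqrtr_ge0 _) sqrt_le).
Qed.

Section Gradients.
Variables (R : realType) (X S A : Type) (d1 d2 n : nat)
  (phi : S -> A -> 'rV[R]_d1) (psi0 : X -> R) (psi : X -> 'rV[R]_d2)
  (x : 'I_n -> X) (s : 'I_n -> S) (a0 a1 : 'I_n -> A) (y : 'I_n -> R).
Local Notation mu := (@logistic R).
Local Notation L := (Ln phi psi0 psi x s a0 a1 y).
Local Notation z i := (zvec phi (s i) (a0 i) (a1 i)).
Local Notation sg g i := (sigmaG psi0 psi g (x i)).

Lemma grad_Ln_theta (th : 'rV[R]_d1) (g : 'rV[R]_d2) :
  grad (fun t => L t g) th =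
  \row_j (- n%:R^-1 * \sum_(i < n) (y i - mu (sg g i * dotv th (z i))) * sg g i * z i 0 j).
Proof.
apply/matrixP => k j; rewrite !mxE derive_along.
have -> : (fun h : R => L (h *: delta_mx 0 j + th) g) = fun h => - n%:R^-1 *
    \sum_(i < n) logloss (y i) (sg g i * dotv th (z i) + h * (sg g i * z i 0 j)).
  apply/funext => h; congr (_ * _); apply: eq_bigr => i _.
  by rewrite /logloss dotvDl_delta mulrDr mulrCA.
by rewrite derive_mean_logloss; under eq_bigr do rewrite mulrA.
Qed.

Lemma grad_Ln_gamma (th : 'rV[R]_d1) (g : 'rV[R]_d2) :
  grad (L th) g =
  \row_j (- n%:R^-1 * \sum_(i < n)
    (y i - mu (dotv th (z i) * sg g i)) * dotv th (z i) * psi (x i) 0 j).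
Proof.
apply/matrixP => k j; rewrite !mxE derive_along.
have -> : (fun h : R => L th (h *: delta_mx 0 j + g)) = fun h => - n%:R^-1 *
    \sum_(i < n) logloss (y i) (dotv th (z i) * sg g i + h * (dotv th (z i) * psi (x i) 0 j)).
  apply/funext => h; congr (_ * _); apply: eq_bigr => i _.
  by rewrite /logloss /sigmaG dotvDl_delta; congr logloss; ring.
by rewrite derive_mean_logloss; under eq_bigr do rewrite mulrA.
Qed.

Lemma normr_sigmaG_le (g : 'rV[R]_d2) (x0 : X) :
  `|sigmaG psi0 psi g x0| <= `|psi0 x0| + norm2 g * norm2 (psi x0).
Proof. by apply: le_trans (ler_normD _ _) _; rewrite lerD2l normr_dotv_le. Qed.

Lemma normr_sigmaGB_le (g g' : 'rV[R]_d2) (x0 : X) :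
  `|sigmaG psi0 psi g x0 - sigmaG psi0 psi g' x0| <= norm2 (g - g') * norm2 (psi x0).
Proof. by rewrite /sigmaG opprD addrACA subrr add0r -dotvBl normr_dotv_le. Qed.

Variables Ph Ps E : R.
Hypothesis n_gt0 : (0 < n)%N.
Hypothesis y01 : forall i, y i = 0 \/ y i = 1.
Hypothesis z_le : forall i, norm2 (z i) <= 2 * Ph.
Hypothesis psi_le : forall x0, `|psi0 x0| ^+ 2 + norm2 (psi x0) ^+ 2 <= Ps ^+ 2.
Hypothesis Ps_ge0 : 0 <= Ps.
Hypothesis E_ge0 : 0 <= E.

Lemma grad_theta_lipschitz_gamma (th : 'rV[R]_d1) (g g' : 'rV[R]_d2) :
  (d2 = 0%N \/ norm2 th * (1 + 2 * norm2 g') / 3 <= E) ->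
  norm2 (grad (fun t => L t g) th - grad (fun t => L t g') th)
    <= Ph * Ps * (2 + E * Ph * Ps) * norm2 (g - g').
Proof.
move=> coef_le; rewrite !grad_Ln_theta; apply: norm2_mean_rowB_le => // i.
have score := logistic_score_diff_bounded (y01 i) (normr_sigmaGB_le g g' (x i))
  (normr_sigmaG_le g' (x i)) (normr_dotv_le th (z i)).
apply: le_trans (ler_wpM2r (norm2_ge0 _) score) _.
set D := norm2 (g - g'); set P := norm2 (psi (x i)); set Z := norm2 (z i).
set Q := `|psi0 (x i)| + norm2 g' * P.
have -> : D * P * (1 + Q * (norm2 th * Z) / 6) * Z
    = (P * (1 + Q * (norm2 th * Z) / 6) * Z) * D by ring.
apply: ler_wpM2r; first exact: norm2_ge0.
apply: sample_factor_le; rewrite ?addr_ge0 ?mulr_ge0 ?norm2_ge0 ?z_le //.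
by case: coef_le => [d2_0|]; [left; exact: norm2_dim0 | right].
Qed.

Lemma grad_gamma_lipschitz_theta (th th' : 'rV[R]_d1) (g : 'rV[R]_d2) :
  (d2 = 0%N \/ norm2 th' * (1 + 2 * norm2 g) / 3 <= E) ->
  norm2 (grad (L th) g - grad (L th') g)
    <= Ph * Ps * (2 + E * Ph * Ps) * norm2 (th - th').
Proof.
move=> coef_le; rewrite !grad_Ln_gamma; apply: norm2_mean_rowB_le => // i.
have dotB_le : `|dotv th (z i) - dotv th' (z i)| <= norm2 (th - th') * norm2 (z i).
  by rewrite -dotvBl normr_dotv_le.
have score := logistic_score_diff_bounded (y01 i) dotB_le
  (normr_dotv_le th' (z i)) (normr_sigmaG_le g (x i)).
apply: le_trans (ler_wpM2r (norm2_ge0 _) score) _.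
set D := norm2 (th - th'); set P := norm2 (psi (x i)); set Z := norm2 (z i).
set Q := `|psi0 (x i)| + norm2 g * P.
have -> : D * Z * (1 + norm2 th' * Z * Q / 6) * P
    = (P * (1 + Q * (norm2 th' * Z) / 6) * Z) * D by ring.
apply: ler_wpM2r; first exact: norm2_ge0.
apply: sample_factor_le; rewrite ?addr_ge0 ?mulr_ge0 ?norm2_ge0 ?z_le //.
by case: coef_le => [d2_0|]; [left; exact: norm2_dim0 | right].
Qed.
End Gradients.

Theorem lemmaS5 (R : realType) (X S A : Type) (d1 d2 n : nat)
  (phi : S -> A -> 'rV[R]_d1) (psi0 : X -> R) (psi : X -> 'rV[R]_d2)
  (phi_max psi_max theta_max gamma_max b : R)
  (theta_star : 'rV[R]_d1) (gamma_star : 'rV[R]_d2)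
  (x : 'I_n -> X) (s : 'I_n -> S) (a0 a1 : 'I_n -> A) (y : 'I_n -> R) :
  (0 < n)%N ->
  0 <= b ->
  (* (A1) *)
  (forall (s0 : S) (a : A), norm2 (phi s0 a) <= phi_max) ->
  (forall j, `|theta_star 0 j| <= theta_max) ->
  (* (A2) *)
  (exists x0 : X, psi0 x0 != 0) ->
  (forall x0 : X, Num.sqrt (psi0 x0 ^+ 2 + \sum_(j < d2) psi x0 0 j ^+ 2) <= psi_max) ->
  (1 <= gamma_max /\ forall j, `|gamma_star 0 j| <= gamma_max) ->
  (* binary responses *)
  (forall i, y i = 0 \/ y i = 1) ->
  let L := Ln phi psi0 psi x s a0 a1 y in
  let Mt := phi_max * psi_max *
     (2 + (b * Num.max (Num.sqrt d1%:R * theta_max) (Num.sqrt d2%:R * gamma_max)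
              / Num.sqrt 2
           + Num.sqrt (d1%:R * d2%:R) * gamma_max * theta_max) * phi_max * psi_max) in
  (forall theta : 'rV[R]_d1,
     norm2 (theta - theta_star) <= b / Num.sqrt 2 ->
     forall (g g' : 'rV[R]_d2),
       (1 <= gamma_max /\ forall j, `|g' 0 j| <= gamma_max) ->
       norm2 (grad (fun t => L t g) theta - grad (fun t => L t g') theta)
         <= Mt * norm2 (g - g'))
  /\
  (forall g : 'rV[R]_d2,
     norm2 (g - gamma_star) <= b / Num.sqrt 2 ->
     forall (theta theta' : 'rV[R]_d1),
       (forall j, `|theta' 0 j| <= theta_max) ->
       norm2 (grad (L theta) g - grad (L theta') g)
         <= Mt * norm2 (theta - theta')).
Proof.
move=> n_gt0 b_ge0 phi_le theta_star_le _ psi_le [gamma_max_ge1 gamma_star_le] y01 L Mt.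
rewrite {}/Mt.
set B := b / Num.sqrt 2; set T := Num.sqrt d1%:R * theta_max.
set K := Num.sqrt d2%:R * gamma_max.
have B_ge0 : 0 <= B by rewrite divr_ge0 ?sqrtr_ge0.
have theta_star_le_T : norm2 theta_star <= T := norm2_le_sqrt_dim theta_star_le.
have gamma_star_le_K : norm2 gamma_star <= K := norm2_le_sqrt_dim gamma_star_le.
(* if d2 = 0 then K = 0, but then the psi-features vanish and no coefficient bound is needed *)
have K_ge1 : d2 = 0%N \/ 1 <= K.
  have [->|d2_gt0] := posnP d2; [by left | right].
  by rewrite -[1]mul1r ler_pM // -{1}sqrtr1 ler_sqrt ?ler0n // ler1n.
have -> : b * Num.max T K / Num.sqrt 2 + Num.sqrt (d1%:R * d2%:R) * gamma_max * theta_max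
    = B * Num.max T K + T * K by rewrite /B /T /K sqrtrM ?ler0n //; ring.
have T_ge0 : 0 <= T := le_trans (norm2_ge0 _) theta_star_le_T.
have E_ge0 : 0 <= B * Num.max T K + T * K.
  have K_ge0 : 0 <= K := le_trans (norm2_ge0 _) gamma_star_le_K.
  by rewrite addr_ge0 // mulr_ge0 // le_max T_ge0.
have psi_max_ge0 : 0 <= psi_max := le_trans (sqrtr_ge0 _) (psi_le (x (Ordinal n_gt0))).
have z_le i := norm2_zvec_le (s i) (a0 i) (a1 i) phi_le.
have psi_sq_le x0 := sqr_normr_norm2_le (psi_le x0).
split.
- move=> th th_near g g' [_ g'_le]; apply: grad_theta_lipschitz_gamma => //.
  case: K_ge1 => [|K_ge1]; [by left | right].
  apply: coef_le_near_theta_star; rewrite ?norm2_ge0 //.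
    exact: norm2_le_dist th_near theta_star_le_T.
  exact: norm2_le_sqrt_dim.
- move=> g g_near th th' th'_le; apply: grad_gamma_lipschitz_theta => //.
  case: K_ge1 => [|K_ge1]; [by left | right].
  apply: coef_le_near_gamma_star; rewrite ?norm2_ge0 //.
    exact: norm2_le_sqrt_dim.
  exact: norm2_le_dist g_near gamma_star_le_K.
Qed.
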